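(* Let $V$ be a finite dimensional $\mathbb{Q}$-vector space, $C\subset V$ a full dimensional convex polyhedral cone, $\Gamma\subset V$ a full rank lattice, and $\Delta:C\to\mathcal{P}_n(\mathbb{Q})$ a linear family of polytopes. Let $\kappa\in\Gamma$ be such that $\Delta(\kappa)$ is an anticanonical polytope for $(\Delta,\Gamma)$, and assume $\kappa\in C^\circ$. Then $\Delta(\kappa)$ contains exactly one lattice point of $\mathbb{Z}^n$ in its (relative) interior.
   Context: $\mathcal{P}_n(\mathbb{Q})$ is the set of convex polytopes in $\mathbb{R}^n$ with rational vertices. A linear family is a map $\Delta:C\to\mathcal{P}_n(\mathbb{Q})$ with $\Delta(c_1\lambda_1+c_2\lambda_2)=c_1\Delta(\lambda_1)+c_2\Delta(\lambda_2)$ (Minkowski sum) for $\lambda_i\in C$, $c_i\in\mathbb{Q}_{\ge0}$; it extends linearly to $V$ with values in virtual polytopes. For a convex set $P$, $N(P)=|P\cap\mathbb{Z}^n|$, and $P^\circ$ denotes the relative interior. $\Delta(\kappa)$, $\kappa\in\Gamma$, is an anticanonical polytope for $(\Delta,\Gamma)$ if for all $\gamma\in C^\circ\cap\Gamma$ with $\gamma-\kappa\in C\cap\Gamma$ we have $N(\Delta(\gamma-\kappa))=N(\Delta^\circ(\gamma))$. *)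

(* V = 'rV[rat]_d, R^n = 'rV[R]_n for R : realType. *)
From HB Require Import structures.
From mathcomp Require Import all_boot all_order all_algebra.
From mathcomp Require Import reals.
Set Implicit Arguments. Unset Strict Implicit. Unset Printing Implicit Defensive.
Import Order.TTheory GRing.Theory Num.Theory.
Local Open Scope ring_scope.

Section Defs.
Variable R : realType.

Definition rset (n : nat) := 'rV[R]_n -> Prop.

Definition conv n (S : seq 'rV[R]_n) : rset n := fun x =>
  exists w : 'I_(size S) -> R,
    (forall i, 0 <= w i) /\ \sum_i w i = 1 /\
    x = \sum_(i < size S) w i *: S`_i.

(* the polytope with rational generating points S (a rational polytope;
   its vertices are among the points of S, hence rational) *)
Definition polytope n (S : seq 'rV[rat]_n) : rset n :=
  conv [seq map_mx (@ratr R) v | v <- S].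

Definition minksum n (A B : rset n) : rset n := fun x =>
  exists a b, A a /\ B b /\ x = a + b.

Definition mscale n (c : R) (A : rset n) : rset n := fun x =>
  exists a, A a /\ x = c *: a.

Definition set_eq n (A B : rset n) := forall x, A x <-> B x.

Definition aff n (P : rset n) : rset n := fun x =>
  exists (s : seq 'rV[R]_n) (w : 'I_(size s) -> R),
    (forall i, P s`_i) /\ \sum_i w i = 1 /\
    x = \sum_(i < size s) w i *: s`_i.

Definition relint n (P : rset n) : rset n := fun x =>
  P x /\ exists e : R, 0 < e /\
    forall y : 'rV[R]_n, aff P y -> (forall i, `|y 0 i - x 0 i| < e) -> P y.

Definition lattice_pt n (x : 'rV[R]_n) : Prop :=
  forall i, exists z : int, x 0 i = z%:~R.

Definition latcount n (P : rset n) (k : nat) : Prop :=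
  exists s : seq 'rV[R]_n, uniq s /\ size s = k /\
    forall x, x \in s <-> (P x /\ lattice_pt x).

(* N(P) = N(Q), for sets with finitely many lattice points
   (such as polytopes) *)
Definition same_latcount n (P Q : rset n) : Prop :=
  forall k, latcount P k <-> latcount Q k.

End Defs.
Arguments polytope R {n} S.

Definition cone d (G : seq 'rV[rat]_d) : 'rV[rat]_d -> Prop := fun x =>
  exists w : 'I_(size G) -> rat,
    (forall i, 0 <= w i) /\ x = \sum_(i < size G) w i *: G`_i.

Definition interior d (C : 'rV[rat]_d -> Prop) : 'rV[rat]_d -> Prop := fun x =>
  C x /\ exists e : rat, 0 < e /\
    forall y : 'rV[rat]_d, (forall i, `|y 0 i - x 0 i| < e) -> C y.

(* full rank lattice Gamma = Z-span of the rows of an invertible B *)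
Definition in_lattice d (B : 'M[rat]_d) (x : 'rV[rat]_d) : Prop :=
  exists z : 'rV[int]_d, x = map_mx (fun k : int => k%:~R) z *m B.

Definition linear_family (R : realType) d n (C : 'rV[rat]_d -> Prop)
    (Delta : 'rV[rat]_d -> seq 'rV[rat]_n) : Prop :=
  (forall l, C l -> (0 < size (Delta l))%N) /\
  forall (l1 l2 : 'rV[rat]_d) (c1 c2 : rat), C l1 -> C l2 -> 0 <= c1 -> 0 <= c2 ->
    set_eq (polytope R (Delta (c1 *: l1 + c2 *: l2)))
      (minksum (mscale (ratr c1) (polytope R (Delta l1)))
               (mscale (ratr c2) (polytope R (Delta l2)))).

Definition anticanonical (R : realType) d n (C : 'rV[rat]_d -> Prop)
    (B : 'M[rat]_d) (Delta : 'rV[rat]_d -> seq 'rV[rat]_n) (kappa : 'rV[rat]_d) : Prop :=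
  in_lattice B kappa /\
  forall gamma, interior C gamma -> in_lattice B gamma ->
    C (gamma - kappa) -> in_lattice B (gamma - kappa) ->
    same_latcount (polytope R (Delta (gamma - kappa)))
                  (relint (polytope R (Delta gamma))).

(* Taking gamma = kappa in the anticanonical condition gives
   N(Delta°(kappa)) = N(Delta(0)); linearity forces Delta(0) = 0 * Delta(0) = {0},
   which contains exactly one lattice point. *)
From HB Require Import structures.
From mathcomp Require Import all_boot all_order all_algebra.
From mathcomp Require Import reals.
Set Implicit Arguments. Unset Strict Implicit. Unset Printing Implicit Defensive.
Import Order.TTheory GRing.Theory Num.Theory.
Local Open Scope ring_scope.

Lemma conv_nonempty (R : realType) n (S : seq 'rV[R]_n) :
  (0 < size S)%N -> exists x, conv S x.
Proof.
case: S => [|a S] //= _; exists a.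
exists (fun i : 'I_(size S).+1 => (i == ord0)%:R); split.
  by move=> i; case: (i == ord0).
split; first by rewrite big_ord_recl /= big1 ?addr0.
by rewrite big_ord_recl /= scale1r big1 ?addr0 // => i _; rewrite scale0r.
Qed.

Lemma cone0 d (G : seq 'rV[rat]_d) : cone G 0.
Proof. by exists (fun _ => 0); split=> //; rewrite big1 // => i _; rewrite scale0r. Qed.

Lemma in_lattice0 d (B : 'M[rat]_d) : in_lattice B 0.
Proof. by exists 0; rewrite map_mx0 mul0mx. Qed.

Lemma lattice_pt0 (R : realType) n : lattice_pt (0 : 'rV[R]_n).
Proof. by move=> i; exists 0; rewrite mxE. Qed.

Lemma latcount_point0 (R : realType) n (P : rset R n) :
  (forall x, P x <-> x = 0) -> latcount P 1.
Proof.
move=> P0; exists [:: 0]; split=> //; split=> // x; rewrite inE; split.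
  by move=> /eqP ->; split; [apply/P0 | apply: lattice_pt0].
by move=> [/P0 -> _].
Qed.

Lemma linear_family_polytope0 (R : realType) d n (C : 'rV[rat]_d -> Prop)
    (Delta : 'rV[rat]_d -> seq 'rV[rat]_n) :
  C 0 -> linear_family R C Delta ->
  forall x, polytope R (Delta 0) x <-> x = 0.
Proof.
move=> C0 [Dsz Dlin].
have D0 := Dlin 0 0 0 0 C0 C0 (lexx _) (lexx _).
rewrite scale0r addr0 in D0.
have D0_sub x : polytope R (Delta 0) x -> x = 0.
  move=> /D0 [a [b [[a' [_ ->]] [[b' [_ ->]] ->]]]].
  by rewrite rmorph0 !scale0r addr0.
have [y Dy] : exists y, polytope R (Delta 0) y.
  by apply: conv_nonempty; rewrite size_map; apply: Dsz.
by move=> x; split=> [/D0_sub | ->] //; rewrite -(D0_sub y Dy).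
Qed.

Theorem proposition1p8 (R : realType) (d n : nat)
  (G : seq 'rV[rat]_d) (B : 'M[rat]_d)
  (Delta : 'rV[rat]_d -> seq 'rV[rat]_n) (kappa : 'rV[rat]_d) :
  (exists x, interior (cone G) x) ->
  B \in unitmx ->
  linear_family R (cone G) Delta ->
  anticanonical R (cone G) B Delta kappa ->
  interior (cone G) kappa ->
  latcount (relint (polytope R (Delta kappa))) 1.
Proof.
move=> _ _ Dlin [kappa_lat Dac] kappa_int.
have := Dac kappa kappa_int kappa_lat; rewrite subrr.
move=> /(_ (cone0 G) (in_lattice0 B)) /(_ 1%N) <-.
exact/latcount_point0/linear_family_polytope0/Dlin/cone0.
Qed.
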